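(* Let $g\in\mathcal{G}_0$ and let $k>1$ be an integer. Then $$\limsup_{x\to0^+}\frac{g(x)}{\eta(x)}=\limsup_{n\to\infty}\frac{g(k^{-n})}{\eta(k^{-n})}\quad\text{and}\quad\liminf_{x\to0^+}\frac{g(x)}{\eta(x)}=\liminf_{n\to\infty}\frac{g(k^{-n})}{\eta(k^{-n})}.$$
   Context: $\mathcal{G}_0$ is the set of concave functions $g:[0,1]\to\mathbb{R}$ with $g(0)=\lim_{x\to0^+}g(x)=0$. Let $\eta(x)=-x\log x$ for $x>0$ and $\eta(0)=0$. *)

From Stdlib Require Import Reals Lra Lia.
Open Scope R_scope.

Definition eta (x : R) : R := if Rle_dec x 0 then 0 else - x * ln x.

Definition concave_on_01 (g : R -> R) : Prop :=
  forall x y t, 0 <= x <= 1 -> 0 <= y <= 1 -> 0 <= t <= 1 ->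
    t * g x + (1 - t) * g y <= g (t * x + (1 - t) * y).

(* The class G_0: concave g : [0,1] -> R with g(0) = lim_{x->0+} g(x) = 0.
   g is represented by a total function R -> R; only its values on [0,1] matter. *)
Definition in_G0 (g : R -> R) : Prop :=
  concave_on_01 g /\ g 0 = 0 /\
  (forall eps, 0 < eps -> exists delta, 0 < delta /\
     forall x, 0 < x <= 1 -> x < delta -> Rabs (g x) < eps).

Inductive Rbar : Type :=
  | Finite : R -> Rbar
  | p_infty : Rbar
  | m_infty : Rbar.

Definition is_limsup_seq (u : nat -> R) (l : Rbar) : Prop :=
  match l with
  | Finite L => forall eps, 0 < eps ->
      (forall N, exists n, (N <= n)%nat /\ L - eps < u n) /\
      (exists N, forall n, (N <= n)%nat -> u n < L + eps)
  | p_infty => forall M N, exists n, (N <= n)%nat /\ M < u n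
  | m_infty => forall M, exists N, forall n, (N <= n)%nat -> u n < M
  end.

Definition is_liminf_seq (u : nat -> R) (l : Rbar) : Prop :=
  match l with
  | Finite L => forall eps, 0 < eps ->
      (forall N, exists n, (N <= n)%nat /\ u n < L + eps) /\
      (exists N, forall n, (N <= n)%nat -> L - eps < u n)
  | p_infty => forall M, exists N, forall n, (N <= n)%nat -> M < u n
  | m_infty => forall M N, exists n, (N <= n)%nat /\ u n < M
  end.

Definition is_limsup_right0 (f : R -> R) (l : Rbar) : Prop :=
  match l with
  | Finite L => forall eps, 0 < eps ->
      (forall delta, 0 < delta -> exists x, 0 < x < delta /\ L - eps < f x) /\
      (exists delta, 0 < delta /\ forall x, 0 < x < delta -> f x < L + eps)
  | p_infty => forall M delta, 0 < delta -> exists x, 0 < x < delta /\ M < f x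
  | m_infty => forall M, exists delta, 0 < delta /\
      forall x, 0 < x < delta -> f x < M
  end.

Definition is_liminf_right0 (f : R -> R) (l : Rbar) : Prop :=
  match l with
  | Finite L => forall eps, 0 < eps ->
      (forall delta, 0 < delta -> exists x, 0 < x < delta /\ f x < L + eps) /\
      (exists delta, 0 < delta /\ forall x, 0 < x < delta -> L - eps < f x)
  | p_infty => forall M, exists delta, 0 < delta /\
      forall x, 0 < x < delta -> M < f x
  | m_infty => forall M delta, 0 < delta -> exists x, 0 < x < delta /\ f x < M
  end.

(* Write a_n = k^-n and r(x) = g(x) / eta(x) = (g(x)/x) / (-ln x).  For a
   concave g with g(0) = 0 the slope g(x)/x is nonincreasing, and on the
   block a_(n+1) <= x <= a_n the denominator -ln x lies in [n ln k, (n+1) ln k].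
   Hence r(x) is squeezed between the samples r(a_n) and r(a_(n+1)) up to a
   relative error 1/n, uniformly in x. *)

From Stdlib Require Import Reals Lra Lia.
Open Scope R_scope.

Definition inflate (eps v : R) : R := v + eps * Rabs v.

Lemma inflate_le eps x y : 0 <= eps <= 1 -> x <= y -> inflate eps x <= inflate eps y.
Proof.
  intros Heps Hxy; unfold inflate, Rabs.
  destruct (Rcase_abs x), (Rcase_abs y); nra.
Qed.

Lemma inflate_deflate eps T : 0 <= eps <= 1/2 -> inflate eps (T - 2 * eps * Rabs T) <= T.
Proof.
  intros Heps; unfold inflate.
  assert (Hloss : 0 <= eps * (1 - 2 * eps)) by (apply Rmult_le_pos; lra).
  destruct (Rle_or_lt 0 T) as [HT | HT].
  - assert (0 <= T * (1 - 2 * eps)) by (apply Rmult_le_pos; lra).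
    rewrite (Rabs_pos_eq T), (Rabs_pos_eq (T - 2 * eps * T)) by lra; nra.
  - assert (T * (1 + 2 * eps) < 0) by (apply Rmult_neg_pos; lra).
    rewrite (Rabs_left T), (Rabs_left (T - 2 * eps * - T)) by lra; nra.
Qed.

Lemma lt_inflate_deflate eps T v :
  0 <= eps <= 1/2 -> T < inflate eps v -> T - 2 * eps * Rabs T < v.
Proof.
  intros Heps HT.
  destruct (Rlt_or_le (T - 2 * eps * Rabs T) v) as [Hlt | Hle]; [exact Hlt |].
  pose proof (inflate_le eps _ _ ltac:(lra) Hle).
  pose proof (inflate_deflate eps T Heps); lra.
Qed.

Lemma small_relative_error T e :
  0 < e -> exists eps, 0 < eps /\ eps <= 1/2 /\ 2 * Rabs T * eps <= e.
Proof.
  intros He; pose proof (Rabs_pos T) as HT.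
  set (q := e / (4 * (Rabs T + 1))).
  assert (Hq : q * (4 * (Rabs T + 1)) = e) by (unfold q; field; lra).
  assert (Hq0 : 0 < q) by (unfold q; apply Rdiv_lt_0_compat; lra).
  exists (Rmin (1/2) q); split; [apply Rmin_pos; lra |]; split; [apply Rmin_l |].
  pose proof (Rmin_r (1/2) q); pose proof (Rmin_pos (1/2) q ltac:(lra) Hq0); nra.
Qed.

Lemma quotient_le_inflate h H c L eps :
  h <= H -> 0 < L -> 0 < c -> (1 - eps) * L <= c <= (1 + eps) * L ->
  h / L <= inflate eps (H / c).
Proof.
  intros HhH HL Hc Hcomp.
  set (v := H / c); set (rho := c / L).
  assert (Hsplit : H / L = v * rho) by (unfold v, rho; field; lra).
  assert (Hrho : 1 - eps <= rho <= 1 + eps).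
  { unfold rho; split.
    - apply Rmult_le_reg_r with L; [lra |]; unfold Rdiv; rewrite Rmult_assoc, Rinv_l; lra.
    - apply Rmult_le_reg_r with L; [lra |]; unfold Rdiv; rewrite Rmult_assoc, Rinv_l; lra. }
  assert (HhL : h / L <= H / L)
    by (unfold Rdiv; apply Rmult_le_compat_r; [left; apply Rinv_0_lt_compat |]; lra).
  rewrite Hsplit in HhL; unfold inflate, Rabs; destruct (Rcase_abs v); nra.
Qed.

Section Transfer.
Variables (f : R -> R) (u a : nat -> R).
Hypothesis a_pos : forall n, 0 < a n.
Hypothesis a_to_0 : forall d, 0 < d -> exists N, forall n, (N <= n)%nat -> a n < d.
Hypothesis f_on_a : forall n, f (a n) = u n.
Hypothesis f_dominated : forall eps, 0 < eps -> forall M : nat,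
  exists delta, 0 < delta /\ forall x, 0 < x < delta ->
    exists m, (M <= m)%nat /\ f x <= inflate eps (u m).

(* Upper bounds on f near 0 hold eventually along u (by sampling); values of
   f close to the limsup are witnessed by late samples (by domination). *)
Lemma limsup_seq_of_right0 l : is_limsup_right0 f l -> is_limsup_seq u l.
Proof.
  destruct l as [L | |]; simpl; intros H.
  - intros e He; split.
    + intros N.
      destruct (small_relative_error (L - e/2) (e/2)) as [eps [Heps [Heps2 Herr]]]; [lra |].
      destruct (f_dominated eps Heps N) as [d [Hd Hdom]].
      destruct (proj1 (H (e/2) ltac:(lra)) d Hd) as [x [Hx Hfx]].
      destruct (Hdom x Hx) as [m [Hm Hfm]].
      exists m; split; [exact Hm |].
      pose proof (lt_inflate_deflate eps (L - e/2) (u m) ltac:(lra) ltac:(lra)); lra.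
    + destruct (proj2 (H e He)) as [d [Hd Hbound]].
      destruct (a_to_0 d Hd) as [N HN].
      exists N; intros n Hn; rewrite <- f_on_a; apply Hbound; split; auto.
  - intros M N.
    destruct (f_dominated (1/4) ltac:(lra) N) as [d [Hd Hdom]].
    destruct (H (2 * Rabs M + 2) d Hd) as [x [Hx Hfx]].
    destruct (Hdom x Hx) as [m [Hm Hfm]].
    exists m; split; [exact Hm |].
    pose proof (lt_inflate_deflate (1/4) (2 * Rabs M + 2) (u m) ltac:(lra) ltac:(lra)) as Hlow.
    pose proof (Rle_abs M).
    rewrite (Rabs_pos_eq (2 * Rabs M + 2)) in Hlow by (pose proof (Rabs_pos M); lra); lra.
  - intros M; destruct (H M) as [d [Hd Hbound]].
    destruct (a_to_0 d Hd) as [N HN].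
    exists N; intros n Hn; rewrite <- f_on_a; apply Hbound; split; auto.
Qed.

(* Conversely, samples give values of f arbitrarily close to 0, and eventual
   upper bounds on u propagate to f near 0 through the domination. *)
Lemma limsup_right0_of_seq l : is_limsup_seq u l -> is_limsup_right0 f l.
Proof.
  destruct l as [L | |]; simpl; intros H.
  - intros e He; split.
    + intros d Hd; destruct (a_to_0 d Hd) as [N HN].
      destruct (proj1 (H e He) N) as [n [Hn Hun]].
      exists (a n); split; [split; auto | rewrite f_on_a; exact Hun].
    + destruct (proj2 (H (e/2) ltac:(lra))) as [N HN].
      destruct (small_relative_error (L + e/2) (e/2)) as [eps [Heps [Heps2 Herr]]]; [lra |].
      destruct (f_dominated eps Heps N) as [d [Hd Hdom]].
      exists d; split; [exact Hd |]; intros x Hx.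
      destruct (Hdom x Hx) as [m [Hm Hfm]].
      pose proof (inflate_le eps _ _ ltac:(lra) (Rlt_le _ _ (HN m Hm))) as Hup.
      unfold inflate at 2 in Hup; lra.
  - intros M d Hd; destruct (a_to_0 d Hd) as [N HN].
    destruct (H M N) as [n [Hn Hun]].
    exists (a n); split; [split; auto | rewrite f_on_a; exact Hun].
  - intros M; pose proof (Rabs_pos M); pose proof (Rle_abs (- M)) as HM.
    rewrite Rabs_Ropp in HM.
    destruct (H (- 2 * Rabs M - 2)) as [N HN].
    destruct (f_dominated (1/4) ltac:(lra) N) as [d [Hd Hdom]].
    exists d; split; [exact Hd |]; intros x Hx.
    destruct (Hdom x Hx) as [m [Hm Hfm]].
    pose proof (inflate_le (1/4) _ _ ltac:(lra) (Rlt_le _ _ (HN m Hm))) as Hup.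
    unfold inflate at 2 in Hup; rewrite (Rabs_left (- 2 * Rabs M - 2)) in Hup by lra; lra.
Qed.

Lemma limsup_right0_iff_seq l : is_limsup_right0 f l <-> is_limsup_seq u l.
Proof. split; [apply limsup_seq_of_right0 | apply limsup_right0_of_seq]. Qed.
End Transfer.

Definition Rbar_opp (l : Rbar) : Rbar :=
  match l with Finite L => Finite (- L) | p_infty => m_infty | m_infty => p_infty end.

Lemma liminf_right0_opp f l :
  is_liminf_right0 f l <-> is_limsup_right0 (fun x => - f x) (Rbar_opp l).
Proof.
  destruct l as [L | |]; simpl; split; intros H.
  - intros e He; destruct (H e He) as [Hoften [d [Hd Hbound]]]; split.
    + intros d' Hd'; destruct (Hoften d' Hd') as [x [Hx Hfx]]; exists x; split; [auto | lra].
    + exists d; split; [auto |]; intros x Hx; specialize (Hbound x Hx); lra.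
  - intros e He; destruct (H e He) as [Hoften [d [Hd Hbound]]]; split.
    + intros d' Hd'; destruct (Hoften d' Hd') as [x [Hx Hfx]]; exists x; split; [auto | lra].
    + exists d; split; [auto |]; intros x Hx; specialize (Hbound x Hx); lra.
  - intros M; destruct (H (- M)) as [d [Hd Hbound]]; exists d; split; [auto |].
    intros x Hx; specialize (Hbound x Hx); lra.
  - intros M; destruct (H (- M)) as [d [Hd Hbound]]; exists d; split; [auto |].
    intros x Hx; specialize (Hbound x Hx); lra.
  - intros M d Hd; destruct (H (- M) d Hd) as [x [Hx Hfx]]; exists x; split; [auto | lra].
  - intros M d Hd; destruct (H (- M) d Hd) as [x [Hx Hfx]]; exists x; split; [auto | lra].
Qed.

Lemma liminf_seq_opp u l :
  is_liminf_seq u l <-> is_limsup_seq (fun n => - u n) (Rbar_opp l).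
Proof.
  destruct l as [L | |]; simpl; split; intros H.
  - intros e He; destruct (H e He) as [Hoften [N Hbound]]; split.
    + intros N'; destruct (Hoften N') as [n [Hn Hun]]; exists n; split; [auto | lra].
    + exists N; intros n Hn; specialize (Hbound n Hn); lra.
  - intros e He; destruct (H e He) as [Hoften [N Hbound]]; split.
    + intros N'; destruct (Hoften N') as [n [Hn Hun]]; exists n; split; [auto | lra].
    + exists N; intros n Hn; specialize (Hbound n Hn); lra.
  - intros M; destruct (H (- M)) as [N Hbound]; exists N.
    intros n Hn; specialize (Hbound n Hn); lra.
  - intros M; destruct (H (- M)) as [N Hbound]; exists N.
    intros n Hn; specialize (Hbound n Hn); lra.
  - intros M N; destruct (H (- M) N) as [n [Hn Hun]]; exists n; split; [auto | lra].
  - intros M N; destruct (H (- M) N) as [n [Hn Hun]]; exists n; split; [auto | lra].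
Qed.

Lemma slope_antitone g x y :
  concave_on_01 g -> g 0 = 0 -> 0 < x -> x <= y -> y <= 1 -> g y / y <= g x / x.
Proof.
  intros Hconc Hg0 Hx Hxy Hy.
  set (t := x / y).
  assert (Ht : 0 <= t <= 1).
  { unfold t; split; [apply Rlt_le, Rdiv_lt_0_compat; lra |].
    apply Rmult_le_reg_r with y; [lra |]; unfold Rdiv; rewrite Rmult_assoc, Rinv_l; lra. }
  pose proof (Hconc y 0 t ltac:(lra) ltac:(lra) Ht) as Hchord.
  rewrite Hg0 in Hchord.
  replace (t * y + (1 - t) * 0) with x in Hchord by (unfold t; field; lra).
  replace (g y / y) with ((t * g y + (1 - t) * 0) / x) by (unfold t; field; lra).
  unfold Rdiv; apply Rmult_le_compat_r; [left; apply Rinv_0_lt_compat |]; lra.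
Qed.

Lemma eta_pos x : 0 < x -> eta x = - x * ln x.
Proof. intros Hx; unfold eta; destruct (Rle_dec x 0); lra. Qed.

Lemma ln_le_ln x y : 0 < x -> x <= y -> ln x <= ln y.
Proof.
  intros Hx Hxy; destruct (Req_dec x y) as [-> | Hne]; [lra |].
  left; apply ln_increasing; lra.
Qed.

Definition geometric (K : R) (n : nat) : R := / K ^ n.

Section Geometric.
Variable K : R.
Hypothesis K_gt_1 : 1 < K.

Lemma geometric_pos n : 0 < geometric K n.
Proof. apply Rinv_0_lt_compat, pow_lt; lra. Qed.

Lemma geometric_antitone m n : (m <= n)%nat -> geometric K n <= geometric K m.
Proof.
  intros Hmn; apply Rinv_le_contravar; [apply pow_lt; lra |].
  apply Rle_pow; [lra | exact Hmn].
Qed.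

Lemma geometric_to_0 d : 0 < d -> exists N, forall n, (N <= n)%nat -> geometric K n < d.
Proof.
  intros Hd.
  assert (Hinv : Rabs (/ K) < 1).
  { rewrite Rabs_pos_eq by (left; apply Rinv_0_lt_compat; lra).
    rewrite <- Rinv_1; apply Rinv_lt_contravar; lra. }
  destruct (pow_lt_1_zero (/ K) Hinv d Hd) as [N HN].
  exists N; intros n Hn; specialize (HN n Hn).
  unfold geometric; rewrite <- pow_inv.
  exact (Rle_lt_trans _ _ _ (Rle_abs _) HN).
Qed.

Lemma geometric_block x : 0 < x <= 1 ->
  exists n, geometric K (S n) <= x <= geometric K n.
Proof.
  intros Hx; destruct (geometric_to_0 x ltac:(lra)) as [N HN].
  specialize (HN N (le_n N)); revert HN.
  induction N as [| N IH]; intros HN.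
  - unfold geometric in HN; simpl in HN; lra.
  - destruct (Rlt_dec (geometric K N) x) as [Hlt | Hge]; [exact (IH Hlt) |].
    exists N; lra.
Qed.

Lemma ln_geometric n : ln (geometric K n) = - (INR n * ln K).
Proof.
  unfold geometric; rewrite ln_Rinv, ln_pow; [reflexivity | lra | apply pow_lt; lra].
Qed.

Lemma neg_ln_block n x : geometric K (S n) <= x <= geometric K n ->
  INR n * ln K <= - ln x <= (INR n + 1) * ln K.
Proof.
  intros Hx; pose proof (geometric_pos (S n)) as Hpos.
  pose proof (ln_le_ln _ _ Hpos (proj1 Hx)) as Hlow.
  pose proof (ln_le_ln x (geometric K n) ltac:(lra) (proj2 Hx)) as Hup.
  rewrite ln_geometric in Hlow, Hup; rewrite S_INR in Hlow; lra.
Qed.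

Lemma late_block eps M : 0 < eps -> exists delta, 0 < delta /\
  forall x, 0 < x < delta -> exists n, (M <= n)%nat /\ 1 <= INR n * eps /\
    geometric K (S n) <= x <= geometric K n.
Proof.
  intros Heps; destruct (INR_unbounded (/ eps)) as [N0 HN0].
  set (N := (N0 + M)%nat).
  exists (geometric K N); split; [apply geometric_pos |]; intros x Hx.
  destruct (geometric_block x) as [n Hn].
  { pose proof (geometric_antitone 0 N ltac:(lia)) as H0.
    unfold geometric at 2 in H0; simpl in H0; lra. }
  assert (HNn : (N <= n)%nat).
  { destruct (Nat.le_gt_cases N n) as [Hle | Hgt]; [exact Hle |].
    pose proof (geometric_antitone (S n) N ltac:(lia)); lra. }
  exists n; split; [lia |]; split; [| exact Hn].
  assert (INR N0 <= INR n) by (apply le_INR; lia).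
  assert (/ eps * eps = 1) by (field; lra); nra.
Qed.

End Geometric.

Definition eta_ratio (g : R -> R) (x : R) : R := g x / eta x.

Section BlockEstimates.
Variables (g : R -> R) (K : R).
Hypothesis g_concave : concave_on_01 g.
Hypothesis g_at_0 : g 0 = 0.
Hypothesis K_gt_1 : 1 < K.

Lemma ln_K_pos : 0 < ln K.
Proof. rewrite <- ln_1; apply ln_increasing; lra. Qed.

Lemma eta_ratio_slope x : 0 < x -> 0 < - ln x -> eta_ratio g x = (g x / x) / (- ln x).
Proof. intros Hx Hln; unfold eta_ratio; rewrite eta_pos by exact Hx; field; lra. Qed.

Lemma eta_ratio_sample n : (1 <= n)%nat ->
  eta_ratio g (geometric K n) = (g (geometric K n) / geometric K n) / (INR n * ln K).
Proof.
  intros Hn; pose proof (geometric_pos K K_gt_1 n) as Hpos.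
  assert (0 < INR n * ln K) by (apply Rmult_lt_0_compat; [apply lt_0_INR; lia | apply ln_K_pos]).
  rewrite eta_ratio_slope, ln_geometric by (try rewrite ln_geometric; lra).
  now rewrite Ropp_involutive.
Qed.

Lemma eta_ratio_block n eps x : 0 < eps -> 1 <= INR n * eps ->
  geometric K (S n) <= x <= geometric K n ->
  eta_ratio g x <= inflate eps (eta_ratio g (geometric K (S n))) /\
  - eta_ratio g x <= inflate eps (- eta_ratio g (geometric K n)).
Proof.
  intros Heps Hn Hx.
  assert (Hn1 : (1 <= n)%nat).
  { destruct n as [| n]; [simpl in Hn; lra | lia]. }
  pose proof ln_K_pos as HlnK; pose proof (pos_INR n) as HnR.
  pose proof (neg_ln_block K K_gt_1 n x Hx) as [Hlow Hup].
  assert (HnK : 0 < INR n * ln K) by (apply Rmult_lt_0_compat; [apply lt_0_INR; lia | lra]).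
  pose proof (geometric_pos K K_gt_1 (S n)) as HposS.
  pose proof (geometric_antitone K K_gt_1 0 n ltac:(lia)) as Hle1.
  unfold geometric at 2 in Hle1; simpl in Hle1; rewrite Rinv_1 in Hle1.
  rewrite (eta_ratio_slope x) by lra.
  rewrite (eta_ratio_sample n Hn1), (eta_ratio_sample (S n) ltac:(lia)), S_INR.
  split.
  - apply quotient_le_inflate; [| nra | nra | split; nra].
    apply slope_antitone; auto; lra.
  - rewrite <- !Rdiv_opp_l; apply quotient_le_inflate; [| nra | nra | split; nra].
    rewrite !Rdiv_opp_l; apply Ropp_le_contravar, slope_antitone; auto; lra.
Qed.

Lemma eta_ratio_dominated_above eps M : 0 < eps -> exists delta, 0 < delta /\
  forall x, 0 < x < delta -> exists m, (M <= m)%nat /\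
    eta_ratio g x <= inflate eps (eta_ratio g (geometric K m)).
Proof.
  intros Heps; destruct (late_block K K_gt_1 eps M Heps) as [d [Hd Hlate]].
  exists d; split; [exact Hd |]; intros x Hx.
  destruct (Hlate x Hx) as [n [HMn [Hn Hblock]]].
  exists (S n); split; [lia | exact (proj1 (eta_ratio_block n eps x Heps Hn Hblock))].
Qed.

Lemma eta_ratio_dominated_below eps M : 0 < eps -> exists delta, 0 < delta /\
  forall x, 0 < x < delta -> exists m, (M <= m)%nat /\
    - eta_ratio g x <= inflate eps (- eta_ratio g (geometric K m)).
Proof.
  intros Heps; destruct (late_block K K_gt_1 eps M Heps) as [d [Hd Hlate]].
  exists d; split; [exact Hd |]; intros x Hx.
  destruct (Hlate x Hx) as [n [HMn [Hn Hblock]]].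
  exists n; split; [exact HMn | exact (proj2 (eta_ratio_block n eps x Heps Hn Hblock))].
Qed.

End BlockEstimates.

Theorem mainTheorem9 (g : R -> R) (k : nat) :
  in_G0 g -> (1 < k)%nat ->
  (forall l : Rbar,
     is_limsup_right0 (fun x => g x / eta x) l <->
     is_limsup_seq (fun n => g (/ INR k ^ n) / eta (/ INR k ^ n)) l) /\
  (forall l : Rbar,
     is_liminf_right0 (fun x => g x / eta x) l <->
     is_liminf_seq (fun n => g (/ INR k ^ n) / eta (/ INR k ^ n)) l).
Proof.
  intros [Hconc [Hg0 _]] Hk.
  assert (HK : 1 < INR k) by (apply lt_1_INR; lia).
  change (fun x => g x / eta x) with (eta_ratio g).
  change (fun n => g (/ INR k ^ n) / eta (/ INR k ^ n))
    with (fun n => eta_ratio g (geometric (INR k) n)).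
  split; intros l.
  - apply limsup_right0_iff_seq with (a := geometric (INR k)).
    + exact (geometric_pos (INR k) HK).
    + exact (geometric_to_0 (INR k) HK).
    + reflexivity.
    + intros eps Heps M; exact (eta_ratio_dominated_above g (INR k) Hconc Hg0 HK eps M Heps).
  - rewrite liminf_right0_opp, liminf_seq_opp.
    apply limsup_right0_iff_seq with (a := geometric (INR k)).
    + exact (geometric_pos (INR k) HK).
    + exact (geometric_to_0 (INR k) HK).
    + reflexivity.
    + intros eps Heps M; exact (eta_ratio_dominated_below g (INR k) Hconc Hg0 HK eps M Heps).
Qed.
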